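(* Let $(R,\mathfrak m)$ be a noetherian local ring and $M$ an arbitrary $R$-module. Then $$\operatorname{Ass}_R(D(M))\subseteq \operatorname{Att}_R(M),$$ and the set of prime ideals which are maximal (with respect to inclusion) in $\operatorname{Ass}_R(D(M))$ coincides with the set of prime ideals which are maximal in $\operatorname{Att}_R(M)$.
   Context: $E=E_R(R/\mathfrak m)$ denotes a fixed injective hull of $R/\mathfrak m$, and $D(\cdot)=\operatorname{Hom}_R(\cdot,E)$ is the Matlis duality functor. For an arbitrary $R$-module $N$ (not necessarily finitely generated or artinian): $\operatorname{Ass}_R(N)$ is the set of prime ideals $\mathfrak p$ of $R$ such that $\mathfrak p=\operatorname{Ann}_R(n)$ for some $n\in N$; $\operatorname{Att}_R(N)$ is the set of prime ideals $\mathfrak p$ of $R$ such that $\mathfrak p=\operatorname{Ann}_R(N/U)$ for some $R$-submodule $U\subseteq N$. *)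

From HB Require Import structures.
From mathcomp Require Import all_boot all_algebra.
Set Implicit Arguments. Unset Strict Implicit. Unset Printing Implicit Defensive.
Import GRing.Theory.
Local Open Scope ring_scope.

Definition subsetP {T} (A B : T -> Prop) := forall x, A x -> B x.
Definition seteqP {T} (A B : T -> Prop) := forall x, A x <-> B x.

Section CommAlg.
Variable R : comNzRingType.

Definition is_ideal (I : R -> Prop) : Prop :=
  I 0 /\ (forall a b, I a -> I b -> I (a + b)) /\ (forall r a, I a -> I (r * a)).

Definition is_prime (P : R -> Prop) : Prop :=
  is_ideal P /\ ~ P 1 /\ (forall a b, P (a * b) -> P a \/ P b).

Definition noetherian : Prop :=
  forall I : nat -> R -> Prop, (forall n, is_ideal (I n)) ->
    (forall n, subsetP (I n) (I n.+1)) ->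
    exists n, forall k, (n <= k)%N -> subsetP (I k) (I n).

Definition local_with_max (m : R -> Prop) : Prop :=
  is_ideal m /\ ~ m 1 /\ (forall I, is_ideal I -> ~ I 1 -> subsetP I m).

Definition is_submod (V : lmodType R) (U : V -> Prop) : Prop :=
  U 0 /\ (forall x y, U x -> U y -> U (x + y)) /\ (forall r x, U x -> U (r *: x)).

(* Annihilator of an element, and of a quotient module V/U. *)
Definition ann_elem (V : lmodType R) (v : V) : R -> Prop := fun r => r *: v = 0.
Definition ann_quot (V : lmodType R) (U : V -> Prop) : R -> Prop :=
  fun r => forall x, U (r *: x).

Definition injective_mod (E : lmodType R) : Prop :=
  forall (A B : lmodType R) (i : {linear A -> B}), injective i ->
    forall f : {linear A -> E}, exists g : {linear B -> E}, forall a, g (i a) = f a.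

(* A monomorphism R/m -> E is the same as the
   choice of the image e0 of the class of 1, an element with Ann(e0) = m; its
   image is the cyclic submodule R e0. *)
Definition injective_hull_of_residue (m : R -> Prop) (E : lmodType R) : Prop :=
  injective_mod E /\
  exists e0 : E, seteqP (ann_elem e0) m /\
    (forall N : E -> Prop, is_submod N -> (exists x, N x /\ x <> 0) ->
       exists y, N y /\ y <> 0 /\ exists s : R, y = s *: e0).

Definition Ass (V : lmodType R) (p : R -> Prop) : Prop :=
  is_prime p /\ exists v : V, seteqP p (ann_elem v).

(* Ass_R(D(M)) with D(M) = Hom_R(M, E), whose R-module structure is
   (r f)(x) = r f(x); thus Ann(f) = {r | forall x, r f(x) = 0}. *)
Definition AssD (M E : lmodType R) (p : R -> Prop) : Prop :=
  is_prime p /\ exists f : {linear M -> E},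
    seteqP p (fun r => forall x, r *: f x = 0).

Definition Att (V : lmodType R) (p : R -> Prop) : Prop :=
  is_prime p /\ exists U : V -> Prop, is_submod U /\ seteqP p (ann_quot U).

Definition maximal_in (S : (R -> Prop) -> Prop) (p : R -> Prop) : Prop :=
  S p /\ forall q, S q -> subsetP p q -> subsetP q p.

End CommAlg.

(* For f in D(M), Ann f = Ann(M / ker f), so Ass D(M) lies in Att M.
   Conversely let p = Ann(M/U) be attached; it is proper, so some x is not in U,
   and the injective hull E of R/m yields h in D(M) vanishing on U with
   h x <> 0.  By noetherianity, among the nonzero such h there is one with a
   maximal annihilator; that annihilator is prime, hence in Ass D(M), and it
   contains p.  A subset below which every element of the larger set lies has
   the same maximal elements. *)

From HB Require Import structures.
From mathcomp Require Import all_boot all_algebra.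
From mathcomp Require Import boolp.
Set Implicit Arguments. Unset Strict Implicit. Unset Printing Implicit Defensive.
Import GRing.Theory.
Local Open Scope ring_scope.
Local Open Scope quotient_scope.

Definition linfun_of (R : comNzRingType) (A B : lmodType R) (f : A -> B)
  (lin_f : linear f) : {linear A -> B} :=
  HB.pack f (GRing.isLinear.Build R A B *:%R f lin_f).

Section ScaleVector.
Variables (R : comNzRingType) (V : lmodType R) (v : V).

Lemma scalev_linear : linear (fun r : R^o => (r : R) *: v).
Proof. by move=> a r s; rewrite scalerDl scalerA. Qed.

Definition scalev : {linear R^o -> V} := linfun_of scalev_linear.

Lemma scalevE r : scalev r = r *: v.
Proof. by []. Qed.

End ScaleVector.

Section QuotientModule.
Variables (R : comNzRingType) (V : lmodType R) (U : V -> Prop).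
Hypothesis U_submod : is_submod U.

Definition submod_pred : {pred V} := fun x => `[< U x >].

Lemma submod_pred_zmod_closed : zmod_closed submod_pred.
Proof.
have [U0 [UD UZ]] := U_submod; split; first exact/asboolP.
move=> u v /asboolP Uu /asboolP Uv; apply/asboolP.
by rewrite -scaleN1r; apply: UD => //; apply: UZ.
Qed.

HB.instance Definition _ :=
  GRing.isZmodClosed.Build V submod_pred submod_pred_zmod_closed.

Definition quotmod := Quotient.quot submod_pred.
HB.instance Definition _ := GRing.Zmodule.on quotmod.
HB.instance Definition _ := EqQuotient.on quotmod.

Lemma quotmod_eq (x y : V) : \pi_quotmod x = \pi_quotmod y <-> U (x - y).
Proof.
split; first by move/eqP; rewrite -Quotient.idealrBE => /asboolP.
by move=> Uxy; apply/eqP; rewrite -Quotient.idealrBE; apply/asboolP.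
Qed.

Lemma quotmod_piD x y : \pi_quotmod (x + y) = \pi_quotmod x + \pi_quotmod y.
Proof. exact: raddfD. Qed.

Definition quotmod_scale (a : R) (q : quotmod) : quotmod :=
  \pi_quotmod (a *: repr q).

Lemma quotmod_scale_pi a x :
  \pi_quotmod (a *: x) = quotmod_scale a (\pi_quotmod x).
Proof.
apply/quotmod_eq; rewrite -scalerBr.
by apply: U_submod.2.2; apply/quotmod_eq; rewrite reprK.
Qed.

Lemma quotmod_scaleA a b q :
  quotmod_scale a (quotmod_scale b q) = quotmod_scale (a * b) q.
Proof. by elim/(@quotW _ quotmod): q => x; rewrite -!quotmod_scale_pi scalerA. Qed.

Lemma quotmod_scale1 : left_id 1 quotmod_scale.
Proof. by elim/(@quotW _ quotmod) => x; rewrite -quotmod_scale_pi scale1r. Qed.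

Lemma quotmod_scaleDr : right_distributive quotmod_scale +%R.
Proof.
move=> a q q'; elim/(@quotW _ quotmod): q => x; elim/(@quotW _ quotmod): q' => y.
by rewrite -quotmod_piD -!quotmod_scale_pi scalerDr quotmod_piD.
Qed.

Lemma quotmod_scaleDl q : {morph quotmod_scale^~ q : a b / a + b}.
Proof.
move=> a b; elim/(@quotW _ quotmod): q => x.
by rewrite -!quotmod_scale_pi scalerDl quotmod_piD.
Qed.

HB.instance Definition _ := GRing.Zmodule_isLmodule.Build R quotmod
  quotmod_scaleA quotmod_scale1 quotmod_scaleDr quotmod_scaleDl.

Lemma quotmod_pi_linear : linear (\pi_quotmod : V -> quotmod).
Proof. by move=> a x y; rewrite quotmod_piD quotmod_scale_pi. Qed.

Definition quotmod_pi : {linear V -> quotmod} := linfun_of quotmod_pi_linear.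

Lemma quotmod_piW (P : quotmod -> Prop) :
  (forall x, P (quotmod_pi x)) -> forall q, P q.
Proof. exact: quotW. Qed.

Lemma quotmod_pi_eq0 (x : V) : quotmod_pi x = 0 <-> U x.
Proof. by rewrite -(raddf0 quotmod_pi) quotmod_eq subr0. Qed.

Lemma quotmod_lift (W : lmodType R) (phi : {linear V -> W}) :
  (forall u, U u -> phi u = 0) ->
  exists g : {linear quotmod -> W}, forall x, g (quotmod_pi x) = phi x.
Proof.
move=> phiU; pose g (q : quotmod) := phi (repr q).
have gE x : g (quotmod_pi x) = phi x.
  apply/eqP; rewrite -subr_eq0 -linearB; apply/eqP/phiU.
  by apply/quotmod_eq; rewrite reprK.
have lin_g : linear g.
  move=> a q q'; elim/quotmod_piW: q => x; elim/quotmod_piW: q' => y.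
  by rewrite -linearP !gE linearP.
by exists (linfun_of lin_g).
Qed.

End QuotientModule.

Section ColonIdeal.
Variables (R : comNzRingType) (V : lmodType R) (U : V -> Prop).
Hypothesis U_submod : is_submod U.

Lemma colon_submod (x : V) : is_submod (fun r : R^o => U (r *: x)).
Proof.
have [U0 [UD UZ]] := U_submod; split; first by rewrite scale0r.
split; first by move=> a b Ua Ub; rewrite scalerDl; apply: UD.
by move=> r a Ua; rewrite -scalerA; apply: UZ.
Qed.

Lemma colon_ideal (x : V) : is_ideal (fun r : R => U (r *: x)).
Proof. exact: colon_submod. Qed.

Lemma colon_embedding (x : V) :
  exists2 i : {linear quotmod (colon_submod x) -> quotmod U_submod},
    injective i & i (quotmod_pi _ 1) = quotmod_pi _ x.
Proof.
have colon_mulx0 r : U (r *: x) -> scalev (quotmod_pi U_submod x) r = 0.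
  by move=> Ur; rewrite scalevE -linearZ; apply/quotmod_pi_eq0.
have [i iE] := quotmod_lift (colon_submod x) colon_mulx0.
exists i; last by rewrite iE scalevE scale1r.
elim/quotmod_piW => r; elim/quotmod_piW => s.
rewrite !iE !scalevE => /eqP; rewrite -subr_eq0 -scalerBl -linearZ.
by move/eqP/quotmod_pi_eq0 => Urs; apply/quotmod_eq.
Qed.

End ColonIdeal.

(* R/(U : x) embeds into V/U via 1 |-> x and maps to E via 1 |-> e0, as
   (U : x) lies in m = Ann e0; injectivity of E extends the latter along the
   former. *)
Lemma residue_hull_separates (R : comNzRingType) (m : R -> Prop)
    (E V : lmodType R) (e0 : E) :
  local_with_max m -> injective_mod E -> seteqP (ann_elem e0) m ->
  forall U : V -> Prop, is_submod U -> forall x, ~ U x ->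
  exists2 h : {linear V -> E}, (forall u, U u -> h u = 0) & h x <> 0.
Proof.
move=> [_ [m_proper m_max]] E_inj ann_e0 U U_submod x Ux.
have colon_m : subsetP (fun r => U (r *: x)) m.
  by apply: m_max; [exact: colon_ideal | rewrite scale1r].
have colon_e0 r : U (r *: x) -> scalev e0 r = 0.
  by move=> Ur; apply/ann_e0/colon_m.
have [f fE] := quotmod_lift (colon_submod U_submod x) colon_e0.
have [i i_inj i1] := colon_embedding U_submod x.
have [g gE] := E_inj _ _ i i_inj f.
exists (g \o quotmod_pi U_submod) => [u /quotmod_pi_eq0 pi_u0|].
  by rewrite -[LHS]/(g (quotmod_pi _ u)) pi_u0 linear0.
rewrite -[LHS]/(g (quotmod_pi _ x)) -i1 gE fE scalevE scale1r => e0_0.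
by apply/m_proper/ann_e0; rewrite /ann_elem e0_0 scaler0.
Qed.

Section MaximalIdeals.
Variable R : comNzRingType.

Lemma subsetP_antisym (I J : R -> Prop) : subsetP I J -> subsetP J I -> I = J.
Proof. by move=> IJ JI; apply/funext => r; apply/propext; split=> [/IJ|/JI]. Qed.

Lemma noetherian_maximal_in (S : (R -> Prop) -> Prop) :
  noetherian R -> (forall I, S I -> is_ideal I) -> (exists I, S I) ->
  exists I, maximal_in S I.
Proof.
move=> R_noeth S_ideal [I0 SI0]; apply: contrapT => no_max.
have grow I : exists J, S I -> [/\ S J, subsetP I J & ~ subsetP J I].
  have [SI|] := pselect (S I); last by exists I.
  apply: contrapT => no_J; apply: no_max; exists I; split=> // J SJ IJ.
  by apply: contrapT => JI; apply: no_J; exists J.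
pose next I := projT1 (cid (grow I)).
have nextP I : S I -> [/\ S (next I), subsetP I (next I) & ~ subsetP (next I) I].
  exact: (projT2 (cid (grow I))).
pose chain n := iter n next I0.
have S_chain n : S (chain n) by elim: n => [|n IHn] //=; case: (nextP _ IHn).
have [n stable] := R_noeth chain (fun n => S_ideal _ (S_chain n))
  (fun n => let: And3 _ sub _ := nextP _ (S_chain n) in sub).
by case: (nextP _ (S_chain n)) => _ _; apply; exact: (stable n.+1).
Qed.

Lemma maximal_in_cofinal (S T : (R -> Prop) -> Prop) :
  (forall I, S I -> T I) -> (forall I, T I -> exists2 J, S J & subsetP I J) ->
  forall I, maximal_in S I <-> maximal_in T I.
Proof.
move=> ST T_le_S I; split=> [[SI I_max]|[TI I_max]].
  split=> [|J TJ IJ]; first exact: ST.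
  have [K SK JK] := T_le_S J TJ.
  by move=> r /JK; apply: I_max => // r' /IJ /JK.
have [J SJ IJ] := T_le_S I TI.
have JI := I_max J (ST J SJ) IJ.
split=> [|K SK]; first by rewrite (subsetP_antisym IJ JI).
exact: I_max K (ST K SK).
Qed.

End MaximalIdeals.

Section DualAnnihilator.
Variables (R : comNzRingType) (M E : lmodType R).

Definition annD (h : {linear M -> E}) : R -> Prop := fun r => forall x, r *: h x = 0.

Lemma annD_ideal h : is_ideal (annD h).
Proof.
split; first by move=> x; rewrite scale0r.
split; first by move=> a b ha hb x; rewrite scalerDl ha hb addr0.
by move=> r a ha x; rewrite -scalerA ha scaler0.
Qed.

Lemma annD_scale (a : R) (h : {linear M -> E}) r : annD (a \*: h) r <-> annD h (r * a).
Proof. by split=> ha x; move: (ha x); rewrite /= scalerA. Qed.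

(* [~ I 1] says that [h] is nonzero. *)
Definition annD_family (P : {linear M -> E} -> Prop) (I : R -> Prop) : Prop :=
  exists2 h, P h & I = annD h /\ ~ I 1.

Lemma annD_family_maximal_prime (P : {linear M -> E} -> Prop) I :
  (forall (a : R) (h : {linear M -> E}), P h -> P (a \*: h)) ->
  maximal_in (annD_family P) I -> is_prime I.
Proof.
move=> P_scale [[h Ph [-> h_ne0]] h_max].
split; [exact: annD_ideal | split=> // a b hab].
have [ha|ha] := pselect (annD h a); [by left | right].
have ah_ne0 : ~ annD (a \*: h) 1 by move/annD_scale; rewrite mul1r.
have h_ah : subsetP (annD h) (annD (a \*: h)).
  by move=> r hr; apply/annD_scale; rewrite mulrC; apply: (annD_ideal h).2.2.
apply: (h_max _ _ h_ah); first by exists (a \*: h); [exact: P_scale | split].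
by apply/annD_scale; rewrite mulrC.
Qed.

End DualAnnihilator.

Lemma AssD_Att (R : comNzRingType) (M E : lmodType R) p : AssD M E p -> Att M p.
Proof.
move=> [p_prime [f p_ann]]; split=> //.
exists (fun x => f x = 0); split.
  split; first exact: linear0.
  split; first by move=> x y fx fy; rewrite linearD fx fy addr0.
  by move=> r x fx; rewrite linearZ_LR fx scaler0.
by move=> r; rewrite p_ann; split=> rf x; [rewrite linearZ_LR | rewrite -linearZ_LR].
Qed.

Lemma Att_le_AssD (R : comNzRingType) (m : R -> Prop) (E M : lmodType R) :
  noetherian R -> local_with_max m -> injective_hull_of_residue m E ->
  forall p, Att M p -> exists2 q, AssD M E q & subsetP p q.
Proof.
move=> R_noeth R_local [E_inj [e0 [ann_e0 _]]] p [p_prime [U [U_submod p_ann]]].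
have [x Ux] : exists x, ~ U x.
  apply: contrapT => U_full; apply: p_prime.2.1; apply/p_ann => y.
  by apply: contrapT => Uy; apply: U_full; exists (1 *: y).
have [h0 h0U h0x] := residue_hull_separates R_local E_inj ann_e0 U_submod Ux.
pose P (h : {linear M -> E}) := forall u, U u -> h u = 0.
have P_scale a h : P h -> P (a \*: h) by move=> Ph u Uu; rewrite /= Ph // scaler0.
have [I I_max] : exists I, maximal_in (annD_family P) I.
  apply: noetherian_maximal_in => //; first by move=> I [h _ [-> _]]; apply: annD_ideal.
  exists (annD h0), h0; first exact: h0U.
  by split=> // h0_0; apply: h0x; rewrite -[h0 x]scale1r.
have [[h Ph [I_ann _]] _] := I_max.
exists I; last by move=> r /p_ann pr; rewrite I_ann => y; rewrite -linearZ; apply: Ph.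
split; first exact: annD_family_maximal_prime I_max.
by exists h; rewrite I_ann.
Qed.

Theorem theorem1p11 (R : comNzRingType) (m : R -> Prop) (E M : lmodType R) :
  noetherian R -> local_with_max m -> injective_hull_of_residue m E ->
  (forall p, AssD M E p -> Att M p) /\
  (forall p, maximal_in (AssD M E) p <-> maximal_in (Att M) p).
Proof.
move=> R_noeth R_local E_hull; split; first exact: AssD_Att.
apply: maximal_in_cofinal; first exact: AssD_Att.
exact: Att_le_AssD R_noeth R_local E_hull.
Qed.
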